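(* Let $\tilde{\mathfrak{g}}$ be a real solvable Lie algebra with a metric $\langle,\rangle$ and a pseudo-Iwasawa decomposition $\tilde{\mathfrak{g}}=\mathfrak{g}\oplus^\perp\mathfrak{a}$. Let $H\in\tilde{\mathfrak g}$ be defined by $\langle H,v\rangle=\operatorname{Tr}(\operatorname{ad}v)$ for all $v\in\tilde{\mathfrak g}$. Then the Einstein equation $\widetilde{\operatorname{Ric}}=\lambda\,\mathrm{id}$ holds on $\tilde{\mathfrak{g}}$ if and only if (1) $\mathfrak{g}$ with the induced metric satisfies $\operatorname{Ric}=\lambda\,\mathrm{id}+D$, where $D=\operatorname{ad}H|_{\mathfrak g}$; and (2) $\operatorname{Tr}(\operatorname{ad}X\circ\operatorname{ad}Y)=-\lambda\langle X,Y\rangle$ for all $X,Y\in\mathfrak{a}$. In this case $\operatorname{Tr}D^2=-\lambda\operatorname{Tr}D$.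
   Context: A metric on a Lie algebra is a nondegenerate symmetric bilinear form, possibly indefinite; $\widetilde{\operatorname{Ric}}$ and $\operatorname{Ric}$ denote the Ricci operators of the corresponding left-invariant pseudo-Riemannian metrics on the simply connected Lie groups. A standard decomposition of a metric Lie algebra $\tilde{\mathfrak g}$ is a decomposition $\tilde{\mathfrak{g}}=\mathfrak{g}\oplus^\perp\mathfrak{a}$ as an orthogonal direct sum of vector spaces, where $\mathfrak{g}$ is a nilpotent ideal and $\mathfrak{a}$ is an abelian subalgebra. It is pseudo-Iwasawa if moreover $\operatorname{ad}X$ is self-adjoint with respect to $\langle,\rangle$ for every $X\in\mathfrak{a}$. *)

(* A real Lie algebra of dimension n is modelled on row
   vectors 'rV[R]_n, with bracket given by structure constants
   c i j = [e_i, e_j]; a metric is a symmetric invertible Gram matrix G. *)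
From HB Require Import structures.
From mathcomp Require Import all_boot all_order all_algebra.
From mathcomp Require Import reals.
Set Implicit Arguments. Unset Strict Implicit. Unset Printing Implicit Defensive.
Import Order.TTheory GRing.Theory Num.Theory.
Local Open Scope ring_scope.

Section MetricLie.
Variable R : fieldType.

Section Fixed.
Variable n : nat.
Implicit Types (c : 'I_n -> 'I_n -> 'rV[R]_n) (G : 'M[R]_n) (u v X Y Z : 'rV[R]_n).

(* matrix of ad u in the row-vector convention: ad u (v) = v *m adm c u *)
Definition adm c u : 'M[R]_n := \matrix_(j < n) (\sum_(i < n) u 0 i *: c i j).

Definition lbr c u v : 'rV[R]_n := v *m adm c u.

Definition ip G u v : R := (u *m G *m v^T) 0 0.

Definition is_metric G : Prop := G^T = G /\ G \in unitmx.

Definition is_lie_algebra c : Prop :=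
  (forall u v, lbr c u v = - lbr c v u) /\
  (forall u v w, lbr c u (lbr c v w) + lbr c v (lbr c w u)
                 + lbr c w (lbr c u v) = 0).

(* Levi-Civita connection of the left-invariant metric (Koszul formula):
   2 <nabla_X Y, Z> = <[X,Y],Z> - <[Y,Z],X> + <[Z,X],Y> *)
Definition koszul c G X Y Z : R :=
  (ip G (lbr c X Y) Z - ip G (lbr c Y Z) X + ip G (lbr c Z X) Y) / 2%:R.

Definition nabla c G X Y : 'rV[R]_n :=
  (\row_k koszul c G X Y (delta_mx 0 k)) *m invmx G.

Definition curv c G X Y Z : 'rV[R]_n :=
  nabla c G X (nabla c G Y Z) - nabla c G Y (nabla c G X Z)
  - nabla c G (lbr c X Y) Z.

Definition ric c G Y Z : R := \sum_(k < n) (curv c G (delta_mx 0 k) Y Z) 0 k.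

(* Ricci operator: <Ric Y, Z> = ric(Y, Z) *)
Definition Ricop c G Y : 'rV[R]_n :=
  (\row_k ric c G Y (delta_mx 0 k)) *m invmx G.

(* subspaces are row spaces of matrices (mxalgebra) *)
Definition is_ideal c (g : 'M[R]_n) : Prop :=
  forall x u, (u <= g)%MS -> (lbr c x u <= g)%MS.

(* the subalgebra g is nilpotent: its lower central series vanishes,
   i.e. all iterated brackets [y1,[y2,...,[yk,x]]] with entries in g vanish *)
Definition is_nilpotent_sub c (g : 'M[R]_n) : Prop :=
  exists k : nat, forall (s : seq 'rV[R]_n) (x : 'rV[R]_n),
    size s = k -> all (fun y => (y <= g)%MS) s -> (x <= g)%MS ->
    foldr (lbr c) x s = 0.

Definition is_abelian_sub c (a : 'M[R]_n) : Prop :=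
  forall u v, (u <= a)%MS -> (v <= a)%MS -> lbr c u v = 0.

Fixpoint derived c (k : nat) : 'M[R]_n :=
  match k with
  | 0 => 1%:M
  | k'.+1 => let D := derived c k' in
      (\sum_(i < n) \sum_(j < n) <<lbr c (row i D) (row j D)>>)%MS
  end.

Definition is_solvable c : Prop := exists k, \rank (derived c k) = 0%N.

Definition pseudo_iwasawa c G (g a : 'M[R]_n) : Prop :=
  (g + a == 1%:M)%MS /\ mxdirect (g + a) /\
  (forall u v, (u <= g)%MS -> (v <= a)%MS -> ip G u v = 0) /\
  is_ideal c g /\ is_nilpotent_sub c g /\
  is_abelian_sub c a /\
  (forall X u v, (X <= a)%MS -> ip G (lbr c X u) v = ip G u (lbr c X v)).

End Fixed.

(* Transport to coordinates w.r.t. a basis B : 'M_(m, n) of a subalgebra. *)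
Definition restr_sc n m (c : 'I_n -> 'I_n -> 'rV[R]_n) (B : 'M[R]_(m, n))
  : 'I_m -> 'I_m -> 'rV[R]_m :=
  fun i j => lbr c (row i B) (row j B) *m pinvmx B.

Definition restr_metric n m (G : 'M[R]_n) (B : 'M[R]_(m, n)) : 'M[R]_m :=
  B *m G *m B^T.

(* matrix (row convention) of an endomorphism A preserving <<B>> restricted *)
Definition restr_op n m (A : 'M[R]_n) (B : 'M[R]_(m, n)) : 'M[R]_m :=
  B *m A *m pinvmx B.

End MetricLie.

From HB Require Import structures.
From mathcomp Require Import all_boot all_order all_algebra.
From mathcomp Require Import reals.
From mathcomp Require Import ring.
From mathcomp Require Import complex.
Import Order.TTheory GRing.Theory Num.Theory.
Set Implicit Arguments. Unset Strict Implicit. Unset Printing Implicit Defensive.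
Local Open Scope ring_scope.

(* For X in a, ad X is self-adjoint, and [g~, g~] lies in g, which is orthogonal
   to a; the Koszul formula then gives nabla_X = 0 and nabla_Y X = [Y, X].  Hence
   ric(X, Y) = ric(Y, X) = - Tr (ad X ad Y) for X in a and every Y, which vanishes
   for Y in g because ad X ad Y is then nilpotent.  On g the Levi-Civita connection
   of the induced metric is the g-component of nabla, and a Gauss-type computation
   gives ric(V, W) = ric_g(V, W) - <[H, V], W>, where H lies in a since Tr ad
   vanishes on the nilpotent ideal g.  So the Einstein equation splits into (1) on
   g and (2) on a, and (2) at X = Y = H is Tr D^2 = - lambda Tr D because ad H maps
   into g. *)
Lemma eigenvalue_nilpotent (F : fieldType) n (M : 'M[F]_n) m z :
  M ^+ m = 0 -> eigenvalue M z -> z = 0.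
Proof.
move=> Mm0 /eigenvalueP[v vM nz_v].
have vMk k : v *m M ^+ k = z ^+ k *: v.
  elim: k => [|k IHk]; first by rewrite !expr0 mulmx1 scale1r.
  by rewrite exprS -mulmxE mulmxA vM -scalemxAl IHk scalerA -exprS.
have /eqP := vMk m; rewrite Mm0 mulmx0 eq_sym scaler_eq0 (negbTE nz_v) orbF.
by rewrite expf_eq0 => /andP[_ /eqP].
Qed.

Lemma char_poly_nilpotent (C : closedFieldType) n (M : 'M[C]_n) m :
  M ^+ m = 0 -> char_poly M = 'X^n.
Proof.
move=> Mm0; have [r Er] := closed_field_poly_normal (char_poly M).
rewrite (monicP (char_poly_monic M)) scale1r in Er.
have r0 z : z \in r -> z = 0.
  move=> rz; apply: eigenvalue_nilpotent Mm0 _.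
  by rewrite eigenvalue_root_char Er root_prod_XsubC.
have -> : char_poly M = 'X^(size r).
  rewrite Er (eq_big_seq (fun=> 'X)) => [|z /r0 ->]; last by rewrite subr0.
  by rewrite big_const_seq count_predT iter_mulr_1.
by have := size_char_poly M; rewrite Er size_prod_XsubC => -[->].
Qed.

Lemma mxtrace_nilpotent (R : rcfType) n (M : 'M[R]_n) m : M ^+ m = 0 -> \tr M = 0.
Proof.
move=> Mm0; case: n M Mm0 => [|n] M Mm0; first by rewrite /mxtrace big_ord0.
pose MC := map_mx (real_complex R) M.
have MCm0 : MC ^+ m = 0 by rewrite -rmorphXn Mm0 rmorph0.
have : real_complex R (- \tr M) = 0.
  rewrite rmorphN -trace_map_mx -char_poly_trace // (char_poly_nilpotent MCm0).
  by rewrite coefXn ltn_eqF.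
by case=> /eqP; rewrite oppr_eq0 => /eqP.
Qed.

Section LinearRowMaps.
Variables (R : comNzRingType) (n : nat).
Implicit Types (f h : 'rV[R]_n -> 'rV[R]_n) (M : 'M[R]_n).

Lemma mul_rV_lin1_linear f u : linear f -> u *m lin1_mx f = f u.
Proof.
move=> lin_f; pose fL : {linear 'rV[R]_n -> 'rV[R]_n} :=
  HB.pack f (GRing.isLinear.Build _ _ _ _ f lin_f).
exact: (mul_rV_lin1 fL).
Qed.

Lemma eq_lin1_mx f h : f =1 h -> lin1_mx f = lin1_mx h.
Proof. by move=> fh; apply/matrixP => i j; rewrite !mxE fh. Qed.

Lemma row_lin1_mx f i : row i (lin1_mx f) = f 'e_i.
Proof. by apply/rowP => j; rewrite !mxE. Qed.

Lemma lin1_mx_mulmx M : lin1_mx (fun u => u *m M) = M.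
Proof. by apply/row_matrixP => i; rewrite row_lin1_mx rowE. Qed.

Lemma mxtrace_lin1D f h :
  \tr (lin1_mx (fun u => f u + h u)) = \tr (lin1_mx f) + \tr (lin1_mx h).
Proof. by rewrite -mxtraceD; congr (\tr _); apply/matrixP => i j; rewrite !mxE. Qed.

Lemma mxtrace_lin1N f : \tr (lin1_mx (fun u => - f u)) = - \tr (lin1_mx f).
Proof. by rewrite -raddfN; congr (\tr _); apply/matrixP => i j; rewrite !mxE. Qed.

Lemma lin1_mx_comp f h : linear f -> lin1_mx (fun u => f (h u)) = lin1_mx h *m lin1_mx f.
Proof.
move=> lin_f; apply/row_matrixP => i.
by rewrite row_mul !row_lin1_mx mul_rV_lin1_linear.
Qed.

Lemma lin1_mx_conj (P : 'M[R]_n) f : linear f ->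
  lin1_mx (fun u => f (u *m P) *m P) = P *m lin1_mx f *m P.
Proof.
move=> lin_f; apply/row_matrixP => i.
by rewrite row_lin1_mx !row_mul rowE mul_rV_lin1_linear.
Qed.

Lemma mxtrace_lin1_conj (P : 'M[R]_n) f : linear f -> P *m P = P ->
  \tr (lin1_mx (fun u => f (u *m P) *m P)) = \tr (lin1_mx f *m P).
Proof. by move=> lin_f PP; rewrite lin1_mx_conj // -mulmxA mxtrace_mulC -mulmxA PP. Qed.

Lemma mxtrace_lin1_comp f h : linear f -> linear h ->
  \tr (lin1_mx (fun u => f (h u))) = \tr (lin1_mx (fun u => h (f u))).
Proof.
by move=> lin_f lin_h; rewrite (lin1_mx_comp h lin_f) (lin1_mx_comp f lin_h) mxtrace_mulC.
Qed.

End LinearRowMaps.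

Lemma opprDDD (V : zmodType) (x1 x2 y1 y2 z1 z2 : V) :
  (x1 + x2) - (y1 + y2) - (z1 + z2) = (x1 - y1 - z1) + (x2 - y2 - z2).
Proof. by rewrite !opprD (addrACA x1) (addrACA (x1 - y1)). Qed.

Section LeviCivita.
Variables (R : fieldType) (n : nat) (c : 'I_n -> 'I_n -> 'rV[R]_n) (G : 'M[R]_n).
Implicit Types (u v w X Y Z U : 'rV[R]_n) (x : R).

Lemma row_adm u j : row j (adm c u) = \sum_i u 0 i *: c i j.
Proof. by apply/rowP => k; rewrite !mxE. Qed.

Lemma admD u v : adm c (u + v) = adm c u + adm c v.
Proof.
apply/row_matrixP => j; rewrite linearD /= !row_adm -big_split /=.
by apply: eq_bigr => i _; rewrite mxE scalerDl.
Qed.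

Lemma admZ x u : adm c (x *: u) = x *: adm c u.
Proof.
apply/row_matrixP => j; rewrite linearZ /= !row_adm scaler_sumr.
by apply: eq_bigr => i _; rewrite mxE scalerA.
Qed.

Lemma lbrDl u v w : lbr c (u + v) w = lbr c u w + lbr c v w.
Proof. by rewrite /lbr admD mulmxDr. Qed.
Lemma lbrZl x u w : lbr c (x *: u) w = x *: lbr c u w.
Proof. by rewrite /lbr admZ scalemxAr. Qed.
Lemma lbr0l w : lbr c 0 w = 0.
Proof. by rewrite -[X in lbr c X _](scale0r 0) lbrZl scale0r. Qed.
Lemma lbrDr u v w : lbr c w (u + v) = lbr c w u + lbr c w v.
Proof. by rewrite /lbr mulmxDl. Qed.
Lemma lbrZr x u w : lbr c w (x *: u) = x *: lbr c w u.
Proof. by rewrite /lbr scalemxAl. Qed.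
Lemma lbrNr u w : lbr c w (- u) = - lbr c w u.
Proof. by rewrite /lbr mulNmx. Qed.
Lemma lbr0r w : lbr c w 0 = 0.
Proof. by rewrite /lbr mul0mx. Qed.

Lemma lbr_suml I r (P : pred I) (F : I -> 'rV[R]_n) w :
  lbr c (\sum_(i <- r | P i) F i) w = \sum_(i <- r | P i) lbr c (F i) w.
Proof. exact: (big_morph (lbr c ^~ w) (fun u v => lbrDl u v w) (lbr0l w)). Qed.
Lemma lbr_sumr I r (P : pred I) (F : I -> 'rV[R]_n) w :
  lbr c w (\sum_(i <- r | P i) F i) = \sum_(i <- r | P i) lbr c w (F i).
Proof. exact: (big_morph (lbr c w) (fun u v => lbrDr u v w) (lbr0r w)). Qed.

Lemma ipDl u v w : ip G (u + v) w = ip G u w + ip G v w.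
Proof. by rewrite /ip !mulmxDl mxE. Qed.
Lemma ipZl x u w : ip G (x *: u) w = x * ip G u w.
Proof. by rewrite /ip -!scalemxAl mxE. Qed.
Lemma ipNl u w : ip G (- u) w = - ip G u w.
Proof. by rewrite -scaleN1r ipZl mulN1r. Qed.
Lemma ip0l w : ip G 0 w = 0.
Proof. by rewrite /ip !mul0mx mxE. Qed.
Lemma ipDr u v w : ip G w (u + v) = ip G w u + ip G w v.
Proof. by rewrite /ip linearD /= mulmxDr mxE. Qed.
Lemma ipZr x u w : ip G w (x *: u) = x * ip G w u.
Proof. by rewrite /ip linearZ /= -scalemxAr mxE. Qed.
Lemma ipNr u w : ip G w (- u) = - ip G w u.
Proof. by rewrite -scaleN1r ipZr mulN1r. Qed.

Lemma ip_delta u k : ip G u 'e_k = (u *m G) 0 k.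
Proof. by rewrite /ip trmx_delta -colE mxE. Qed.

Lemma koszulDl X X' Y Z :
  koszul c G (X + X') Y Z = koszul c G X Y Z + koszul c G X' Y Z.
Proof. rewrite /koszul !(lbrDl, lbrDr, ipDl, ipDr); ring. Qed.
Lemma koszulZl x X Y Z : koszul c G (x *: X) Y Z = x * koszul c G X Y Z.
Proof. rewrite /koszul !(lbrZl, lbrZr, ipZl, ipZr); ring. Qed.
Lemma koszulDm X Y Y' Z :
  koszul c G X (Y + Y') Z = koszul c G X Y Z + koszul c G X Y' Z.
Proof. rewrite /koszul !(lbrDl, lbrDr, ipDl, ipDr); ring. Qed.
Lemma koszulZm x X Y Z : koszul c G X (x *: Y) Z = x * koszul c G X Y Z.
Proof. rewrite /koszul !(lbrZl, lbrZr, ipZl, ipZr); ring. Qed.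
Lemma koszulDr X Y Z Z' :
  koszul c G X Y (Z + Z') = koszul c G X Y Z + koszul c G X Y Z'.
Proof. rewrite /koszul !(lbrDl, lbrDr, ipDl, ipDr); ring. Qed.
Lemma koszulZr x X Y Z : koszul c G X Y (x *: Z) = x * koszul c G X Y Z.
Proof. rewrite /koszul !(lbrZl, lbrZr, ipZl, ipZr); ring. Qed.

Lemma nablaDl X X' Y : nabla c G (X + X') Y = nabla c G X Y + nabla c G X' Y.
Proof.
by rewrite /nabla -mulmxDl; congr (_ *m _); apply/rowP => k; rewrite !mxE koszulDl.
Qed.
Lemma nablaZl x X Y : nabla c G (x *: X) Y = x *: nabla c G X Y.
Proof.
by rewrite /nabla scalemxAl; congr (_ *m _); apply/rowP => k; rewrite !mxE koszulZl.
Qed.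
Lemma nablaDr X Y Y' : nabla c G X (Y + Y') = nabla c G X Y + nabla c G X Y'.
Proof.
by rewrite /nabla -mulmxDl; congr (_ *m _); apply/rowP => k; rewrite !mxE koszulDm.
Qed.
Lemma nablaZr x X Y : nabla c G X (x *: Y) = x *: nabla c G X Y.
Proof.
by rewrite /nabla scalemxAl; congr (_ *m _); apply/rowP => k; rewrite !mxE koszulZm.
Qed.
Lemma nablaNl X Y : nabla c G (- X) Y = - nabla c G X Y.
Proof. by rewrite -scaleN1r nablaZl scaleN1r. Qed.
Lemma nabla0r X : nabla c G X 0 = 0.
Proof. by rewrite -[X in nabla c G _ X](scale0r 0) nablaZr scale0r. Qed.

Lemma curvDl U U' Y Z : curv c G (U + U') Y Z = curv c G U Y Z + curv c G U' Y Z.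
Proof. by rewrite /curv !(nablaDl, nablaDr, lbrDl) opprDDD. Qed.
Lemma curvZl x U Y Z : curv c G (x *: U) Y Z = x *: curv c G U Y Z.
Proof. by rewrite /curv !(nablaZl, nablaZr, lbrZl) !scalerBr. Qed.
Lemma curvDm U Y Y' Z : curv c G U (Y + Y') Z = curv c G U Y Z + curv c G U Y' Z.
Proof. by rewrite /curv !(nablaDl, nablaDr, lbrDr) opprDDD. Qed.
Lemma curvDr U Y Z Z' : curv c G U Y (Z + Z') = curv c G U Y Z + curv c G U Y Z'.
Proof. by rewrite /curv !nablaDr opprDDD. Qed.
Lemma curvZr x U Y Z : curv c G U Y (x *: Z) = x *: curv c G U Y Z.
Proof. by rewrite /curv !nablaZr !scalerBr. Qed.

Lemma curv_linear Y Z : linear (fun U => curv c G U Y Z).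
Proof. by move=> x U U'; rewrite curvDl curvZl. Qed.

Lemma ric_mxtrace Y Z : ric c G Y Z = \tr (lin1_mx (fun U => curv c G U Y Z)).
Proof. by rewrite /ric /mxtrace; apply: eq_bigr => k _; rewrite [RHS]mxE. Qed.

Lemma ricDl Y Y' Z : ric c G (Y + Y') Z = ric c G Y Z + ric c G Y' Z.
Proof. by rewrite /ric -big_split; apply: eq_bigr => k _; rewrite curvDm mxE. Qed.
Lemma ricDr Y Z Z' : ric c G Y (Z + Z') = ric c G Y Z + ric c G Y Z'.
Proof. by rewrite /ric -big_split; apply: eq_bigr => k _; rewrite curvDr mxE. Qed.
Lemma ricZr x Y Z : ric c G Y (x *: Z) = x * ric c G Y Z.
Proof. by rewrite /ric mulr_sumr; apply: eq_bigr => k _; rewrite curvZr mxE. Qed.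

Lemma ipC u v : G^T = G -> ip G u v = ip G v u.
Proof.
move=> sG; have tr00 (A : 'M[R]_1) : A 0 0 = A^T 0 0 by rewrite mxE.
by rewrite /ip tr00 !trmx_mul trmxK sG mulmxA.
Qed.

Lemma rv_sum_delta u : u = \sum_k u 0 k *: 'e_k.
Proof. by rewrite {1}(matrix_sum_delta u) big_ord1. Qed.

Section Nondegenerate.
Hypothesis uG : G \in unitmx.

Lemma ip_invmx w Z : ip G (w *m invmx G) Z = \sum_k w 0 k * Z 0 k.
Proof. by rewrite /ip mulmxKV // mxE; apply: eq_bigr => k _; rewrite mxE. Qed.

Lemma ip_nabla X Y Z : ip G (nabla c G X Y) Z = koszul c G X Y Z.
Proof.
rewrite /nabla ip_invmx [in RHS](rv_sum_delta Z).
rewrite (big_morph _ (koszulDr X Y) (_ : koszul c G X Y 0 = 0)); last first.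
  by rewrite -[X in koszul c G _ _ X](scale0r 0) koszulZr mul0r.
by apply: eq_bigr => k _; rewrite koszulZr mxE mulrC.
Qed.

Lemma ip_Ricop Y Z : ip G (Ricop c G Y) Z = ric c G Y Z.
Proof.
rewrite /Ricop ip_invmx [in RHS](rv_sum_delta Z).
rewrite (big_morph _ (ricDr Y) (_ : ric c G Y 0 = 0)); last first.
  by rewrite -[X in ric c G _ X](scale0r 0) ricZr mul0r.
by apply: eq_bigr => k _; rewrite ricZr mxE mulrC.
Qed.

Lemma ip_injl u v : (forall Z, ip G u Z = ip G v Z) -> u = v.
Proof.
move=> uv; apply: (can_inj (mulmxK uG)); apply/rowP => k.
by rewrite -!ip_delta uv.
Qed.

Lemma nabla_ipP X Y w : (forall Z, ip G w Z = koszul c G X Y Z) -> nabla c G X Y = w.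
Proof. by move=> wK; apply: ip_injl => Z; rewrite ip_nabla wK. Qed.

Lemma RicopP Y w : Ricop c G Y = w <-> (forall Z, ric c G Y Z = ip G w Z).
Proof.
split=> [<- Z|wR]; first by rewrite ip_Ricop.
by apply: ip_injl => Z; rewrite ip_Ricop wR.
Qed.

Lemma Ricop_scalarP l :
  (forall Y, Ricop c G Y = l *: Y) <-> (forall Y Z, ric c G Y Z = l * ip G Y Z).
Proof.
split=> [E Y Z | E Y]; first by rewrite (proj1 (RicopP _ _) (E Y)) ipZl.
by apply/RicopP => Z; rewrite E ipZl.
Qed.

End Nondegenerate.
End LeviCivita.

Section MetricTrace.
Variables (R : numFieldType) (n : nat) (G : 'M[R]_n).
Hypotheses (sG : G^T = G) (uG : G \in unitmx).
Implicit Types (b : 'rV[R]_n -> 'rV[R]_n -> R) (f : 'rV[R]_n -> 'rV[R]_n) (M : 'M[R]_n).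

Definition gram_mx b : 'M[R]_n := \matrix_(k, l) b 'e_k 'e_l.

Definition mtrace b : R := \tr (gram_mx b *m invmx G).

Lemma eq_mtrace b b' : (forall U T, b U T = b' U T) -> mtrace b = mtrace b'.
Proof. by move=> bb'; congr (\tr (_ *m _)); apply/matrixP => k l; rewrite !mxE bb'. Qed.

Lemma mtraceD b b' : mtrace (fun U T => b U T + b' U T) = mtrace b + mtrace b'.
Proof.
rewrite /mtrace -mxtraceD -mulmxDl; congr (\tr (_ *m _)).
by apply/matrixP => k l; rewrite !mxE.
Qed.

Lemma mtraceZ x b : mtrace (fun U T => x * b U T) = x * mtrace b.
Proof.
rewrite /mtrace -mxtraceZ scalemxAl; congr (\tr (_ *m _)).
by apply/matrixP => k l; rewrite !mxE.
Qed.

Lemma mtraceN b : mtrace (fun U T => - b U T) = - mtrace b.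
Proof. by rewrite -mulN1r -mtraceZ; apply: eq_mtrace => U T; rewrite mulN1r. Qed.

Lemma mxtrace_lin1_mtrace f : \tr (lin1_mx f) = mtrace (fun U T => ip G (f U) T).
Proof.
rewrite /mtrace; have -> : gram_mx (fun U T => ip G (f U) T) = lin1_mx f *m G.
  by apply/matrixP => k l; rewrite [LHS]mxE ip_delta -row_lin1_mx -row_mul !mxE.
by rewrite mulmxK.
Qed.

Lemma mtrace_ipl M : mtrace (fun U T => ip G (U *m M) T) = \tr M.
Proof. by rewrite -[in RHS](lin1_mx_mulmx M) mxtrace_lin1_mtrace. Qed.

Lemma mtrace_swap b : mtrace (fun U T => b T U) = mtrace b.
Proof.
rewrite /mtrace; have -> : gram_mx (fun U T => b T U) = (gram_mx b)^T.
  by apply/matrixP => k l; rewrite !mxE.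
rewrite -mxtrace_tr trmx_mul trmxK trmx_inv sG.
by rewrite mxtrace_mulC.
Qed.

Lemma mtrace_ipr M : mtrace (fun U T => ip G U (T *m M)) = \tr M.
Proof.
rewrite -mtrace_ipl -mtrace_swap.
by apply: eq_mtrace => U T; rewrite ipC.
Qed.

Lemma mtrace_skew_selfadj b (A : 'M[R]_n) :
  (forall P Q T, b (P + Q) T = b P T + b Q T) ->
  (forall x P T, b (x *: P) T = x * b P T) ->
  (forall P T, b P T = - b T P) ->
  A *m G = G *m A^T ->
  mtrace (fun U T => b (U *m A) T) = 0.
Proof.
move=> bD bZ bN AG.
have b0 T : b 0 T = 0 by rewrite -[X in b X T](scale0r 0) bZ mul0r.
have gramA : gram_mx (fun U T => b (U *m A) T) = A *m gram_mx b.
  apply/matrixP => k l; rewrite !mxE -rowE (rv_sum_delta (row k A)).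
  rewrite (big_morph (b ^~ 'e_l) (fun P Q => bD P Q 'e_l) (b0 'e_l)).
  by apply: eq_bigr => m _; rewrite bZ !mxE.
have gramT : (gram_mx b)^T = - gram_mx b.
  by apply/matrixP => k l; rewrite !mxE bN.
have AT : A^T = invmx G *m A *m G by rewrite -mulmxA AG mulKmx.
suff /eqP : mtrace (fun U T => b (U *m A) T) *+ 2 = 0 by rewrite mulrn_eq0 => /eqP.
apply/eqP; rewrite mulr2n addr_eq0; apply/eqP.
rewrite /mtrace gramA -[LHS]mxtrace_tr !trmx_mul trmx_inv sG gramT AT.
rewrite mulNmx mulmxN raddfN /= !mulmxA mxtrace_mulC !mulmxA mulmxV // mul1mx.
by rewrite mxtrace_mulC mulmxA.
Qed.

End MetricTrace.

Section SelfAdjointTraces.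
Variables (R : numFieldType) (n : nat) (c : 'I_n -> 'I_n -> 'rV[R]_n) (G A : 'M[R]_n).
Hypotheses (sG : G^T = G) (uG : G \in unitmx).
Hypothesis lbrC : forall u v, lbr c u v = - lbr c v u.
Hypothesis A_selfadj : A *m G = G *m A^T.
Implicit Types (U T V W : 'rV[R]_n).

Lemma ip_selfadj U T : ip G (U *m A) T = ip G U (T *m A).
Proof. by rewrite /ip trmx_mul -(mulmxA U A G) A_selfadj !mulmxA. Qed.

Lemma mtrace_lbr_selfadj W : mtrace G (fun U T => ip G (lbr c (U *m A) T) W) = 0.
Proof.
apply: (mtrace_skew_selfadj sG uG (b := fun P T => ip G (lbr c P T) W)) => //.
- by move=> P Q T; rewrite lbrDl ipDl.
- by move=> x P T; rewrite lbrZl ipZl.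
- by move=> P T; rewrite lbrC ipNl.
Qed.

Lemma mxtrace_nabla_selfadj_l W :
  \tr (lin1_mx (fun U => nabla c G (U *m A) W)) = - \tr (A *m adm c W).
Proof.
rewrite (mxtrace_lin1_mtrace uG).
under eq_mtrace => U T.
  have e1 : ip G (lbr c (U *m A) W) T = ip G (U *m - (A *m adm c W)) T.
    by rewrite lbrC /lbr !mulmxN mulmxA.
  have e2 : ip G (lbr c W T) (U *m A) = ip G U (T *m (adm c W *m A)).
    by rewrite ipC // ip_selfadj /lbr mulmxA.
  rewrite ip_nabla // /koszul e1 e2 (lbrC T) ipNl mulrC.
  over.
rewrite mtraceZ !mtraceD !mtraceN mtrace_ipl // mtrace_ipr // mtrace_lbr_selfadj.
by rewrite raddfN /= (mxtrace_mulC (adm c W)) subr0; field.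
Qed.

Lemma mxtrace_nabla_selfadj_r V : \tr (lin1_mx (fun U => nabla c G V (U *m A))) = 0.
Proof.
rewrite (mxtrace_lin1_mtrace uG).
under eq_mtrace => U T.
  have e1 : ip G (lbr c V (U *m A)) T = ip G (U *m (A *m adm c V)) T.
    by rewrite /lbr mulmxA.
  have e3 : ip G (lbr c T V) (U *m A) = - ip G U (T *m (adm c V *m A)).
    by rewrite ipC // ip_selfadj lbrC /lbr mulNmx mulmxA ipNr.
  rewrite ip_nabla // /koszul e1 e3 mulrC.
  over.
rewrite mtraceZ !mtraceD !mtraceN mtrace_ipl // mtrace_ipr // mtrace_lbr_selfadj.
by rewrite (mxtrace_mulC (adm c V)) subr0 addrN mulr0.
Qed.
End SelfAdjointTraces.


Lemma mxtrace_restr_op (F : fieldType) n r (A : 'M[F]_n) (B : 'M[F]_(r, n)) :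
  A *m pinvmx B *m B = A -> \tr (restr_op A B) = \tr A.
Proof. by move=> AK; rewrite /restr_op -(mulmxA B) mxtrace_mulC AK. Qed.

Lemma mxtrace_restr_op_sqr (F : fieldType) n r (A : 'M[F]_n) (B : 'M[F]_(r, n)) :
  A *m pinvmx B *m B = A -> \tr (restr_op A B *m restr_op A B) = \tr (A *m A).
Proof.
move=> AK; rewrite /restr_op -!(mulmxA B) mxtrace_mulC.
by rewrite (mulmxA (A *m pinvmx B) B) AK -mulmxA AK.
Qed.

Section PseudoIwasawa.
Variables (R : rcfType) (n : nat) (c : 'I_n -> 'I_n -> 'rV[R]_n) (G g a : 'M[R]_n).
Hypotheses (lie : is_lie_algebra c) (met : is_metric G) (pI : pseudo_iwasawa c G g a).
Implicit Types (u v w X Y Z U V W T : 'rV[R]_n).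

Local Notation "[ u , v ]" := (lbr c u v).
Local Notation "<< u , v >>" := (ip G u v).
Local Notation nab := (nabla c G).

Lemma lbrC u v : [u, v] = - [v, u].
Proof. by case: lie => anti _; apply: anti. Qed.

Lemma jacobi u v w : [u, [v, w]] + [v, [w, u]] + [w, [u, v]] = 0.
Proof. by case: lie => _; apply. Qed.

Lemma sG : G^T = G. Proof. by case: met. Qed.
Lemma uG : G \in unitmx. Proof. by case: met. Qed.

Lemma capga : (g :&: a = 0)%MS.
Proof. by case: pI => _ [/mxdirect_addsP]. Qed.

Lemma orth_ga u v : (u <= g)%MS -> (v <= a)%MS -> << u, v >> = 0.
Proof. by case: pI => _ [_ [orth _]]; apply: orth. Qed.

Lemma orth_ag u v : (u <= a)%MS -> (v <= g)%MS -> << u, v >> = 0.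
Proof. by move=> ua vg; rewrite ipC ?sG // orth_ga. Qed.

Lemma lbr_idealr x u : (u <= g)%MS -> ([x, u] <= g)%MS.
Proof. by case: pI => _ [_ [_ [ideal _]]]; apply: ideal. Qed.

Lemma lbr_a u v : (u <= a)%MS -> (v <= a)%MS -> [u, v] = 0.
Proof. by case: pI => _ [_ [_ [_ [_ [abel _]]]]]; apply: abel. Qed.

Lemma ad_a_selfadj X u v : (X <= a)%MS -> << [X, u], v >> = << u, [X, v] >>.
Proof. by case: pI => _ [_ [_ [_ [_ [_ sadj]]]]]; apply: sadj. Qed.

Definition projg := locked (proj_mx g a).
Definition proja := locked (proj_mx a g).

Lemma ga_decomp m (u : 'M[R]_(m, n)) : u = u *m projg + u *m proja.
Proof.
case: pI => /andP[_ full] _; rewrite /projg /proja -!lock add_proj_mx ?capga //.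
exact: submx_trans (submx1 u) full.
Qed.

Lemma projg_sub m (u : 'M[R]_(m, n)) : (u *m projg <= g)%MS.
Proof. by rewrite /projg -lock proj_mx_sub. Qed.
Lemma proja_sub m (u : 'M[R]_(m, n)) : (u *m proja <= a)%MS.
Proof. by rewrite /proja -lock proj_mx_sub. Qed.
Lemma projg_id m (u : 'M[R]_(m, n)) : (u <= g)%MS -> u *m projg = u.
Proof. by move=> ug; rewrite /projg -lock proj_mx_id ?capga. Qed.
Lemma proja_id m (u : 'M[R]_(m, n)) : (u <= a)%MS -> u *m proja = u.
Proof. by move=> ua; rewrite /proja -lock proj_mx_id // capmxC capga. Qed.

Lemma orthg_eq0 u : (u <= g)%MS -> (forall v, (v <= g)%MS -> << u, v >> = 0) -> u = 0.
Proof.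
move=> ug u_perp; apply: (ip_injl uG) => Z.
by rewrite ip0l (ga_decomp Z) ipDr u_perp ?projg_sub // orth_ga ?proja_sub // addr0.
Qed.

Lemma lbr_sub_g u v : ([u, v] <= g)%MS.
Proof.
rewrite (ga_decomp u) lbrDl addmx_sub //.
  by rewrite lbrC eqmx_opp lbr_idealr ?projg_sub.
by rewrite (ga_decomp v) lbrDr (lbr_a (proja_sub u) (proja_sub v)) addr0 lbr_idealr ?projg_sub.
Qed.

Lemma ad_a_mx X : (X <= a)%MS -> adm c X *m G = G *m (adm c X)^T.
Proof.
move=> Xa; apply/matrixP => i j.
have entry (M : 'M[R]_n) : M i j = (('e_i : 'rV_n) *m M *m ('e_j : 'rV_n)^T) 0 0.
  by rewrite -rowE trmx_delta -colE !mxE.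
rewrite (entry (_ *m G)) (entry (G *m _)) !mulmxA.
by have := ad_a_selfadj 'e_i 'e_j Xa; rewrite /ip /lbr trmx_mul !mulmxA; apply.
Qed.

Lemma ad_a_mxN X : (X <= a)%MS -> - adm c X *m G = G *m (- adm c X)^T.
Proof. by move=> Xa; rewrite mulNmx ad_a_mx // linearN mulmxN. Qed.

Definition killed j w := forall t : seq 'rV[R]_n, size t = j ->
  all (fun y => (y <= g)%MS) t -> foldr (lbr c) w t = 0.

Lemma killed0 w : killed 0 w -> w = 0.
Proof. by move=> kw; apply: (kw [::]). Qed.

Lemma killedS j w : killed j.+1 w <-> (forall y, (y <= g)%MS -> killed j [y, w]).
Proof.
split=> [kw y yg t st gt | kw t].
  by rewrite -foldr_rcons kw ?size_rcons ?st // all_rcons yg.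
case/lastP: t => [|t y] //; rewrite size_rcons all_rcons foldr_rcons.
by case=> st /andP[yg gt]; apply: kw.
Qed.

Lemma killedD j w w' : killed j w -> killed j w' -> killed j (w + w').
Proof.
move=> kw kw' t st gt.
have -> : foldr (lbr c) (w + w') t = foldr (lbr c) w t + foldr (lbr c) w' t.
  by elim: t {st gt} => //= y t ->; rewrite lbrDr.
by rewrite kw // kw' // addr0.
Qed.

Lemma killed_lbr X j w : killed j w -> killed j [X, w].
Proof.
elim: j w => [|j IHj] w.
  by move=> /killed0 ->; rewrite lbr0r => t /size0nil ->.
move=> /killedS kw; apply/killedS => y yg.
have -> : [y, [X, w]] = [X, [y, w]] + [[y, X], w].
  have := jacobi y X w; rewrite (lbrC w y) lbrNr (lbrC w) => /eqP.
  by rewrite -addrA -opprD subr_eq0 => /eqP.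
by apply: killedD; [exact/IHj/kw | exact/kw/lbr_sub_g].
Qed.

Lemma nilpotent_lowering (M : 'M[R]_n) :
  (forall j u, killed j.+1 u -> killed j (u *m M)) -> exists m, M ^+ m = 0.
Proof.
move=> lowM.
have killedM j u : killed j u -> u *m M ^+ j = 0.
  elim: j u => [|j IHj] u; first by move=> /killed0 ->; rewrite mul0mx.
  by move=> ku; rewrite exprS -mulmxE mulmxA; apply/IHj/lowM.
case: pI => _ [_ [_ [_ [[k nil_g] _]]]]; exists k.+1.
apply/row_matrixP => i; rewrite rowE row0; apply: killedM.
by apply/killedS => y yg t st gt; apply: nil_g (lbr_sub_g y _).
Qed.

Lemma mxtrace_ad_g V : (V <= g)%MS -> \tr (adm c V) = 0.
Proof.
move=> Vg; have [m adVm] : exists m, adm c V ^+ m = 0.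
  by apply: nilpotent_lowering => j u /killedS; apply.
exact: mxtrace_nilpotent adVm.
Qed.

Lemma mxtrace_ad_g_ad V X : (V <= g)%MS -> \tr (adm c V *m adm c X) = 0.
Proof.
move=> Vg; have [m adVXm] : exists m, (adm c V *m adm c X) ^+ m = 0.
  by apply: nilpotent_lowering => j u /killedS ku; rewrite mulmxA; apply/killed_lbr/ku.
exact: mxtrace_nilpotent adVXm.
Qed.

Lemma nabla_a X Y : (X <= a)%MS -> nab X Y = 0.
Proof.
move=> Xa; apply: (nabla_ipP uG) => Z; rewrite ip0l /koszul.
rewrite (ad_a_selfadj Y Z Xa) (ipC Y) ?sG // (lbrC X Z) ipNl (orth_ga (lbr_sub_g Y Z) Xa).
by rewrite subr0 addNr mul0r.
Qed.

Lemma nabla_r_a Y X : (X <= a)%MS -> nab Y X = [Y, X].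
Proof.
move=> Xa; apply: (nabla_ipP uG) => Z; rewrite /koszul.
rewrite (ad_a_selfadj Z Y Xa) (lbrC X Y) ipNr (ipC Z) ?sG // (orth_ga (lbr_sub_g Z Y) Xa).
by rewrite addr0 opprK; field.
Qed.

Lemma ric_a_l X Y : (X <= a)%MS -> ric c G X Y = - \tr (adm c X *m adm c Y).
Proof.
move=> Xa; rewrite ric_mxtrace.
rewrite (@eq_lin1_mx _ _ _ (fun U => - nab (U *m - adm c X) Y)); last first.
  move=> U; rewrite /curv (nabla_a Y Xa) nabla0r (nabla_a _ Xa) subrr sub0r.
  by rewrite lbrC /lbr mulmxN.
rewrite mxtrace_lin1N (mxtrace_nabla_selfadj_l sG uG lbrC (ad_a_mxN Xa)).
by rewrite mulNmx opprK linearN.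
Qed.

Lemma ric_a_r Y X : (X <= a)%MS -> ric c G Y X = - \tr (adm c Y *m adm c X).
Proof.
move=> Xa; rewrite ric_mxtrace.
rewrite (@eq_lin1_mx _ _ _ (fun U => nab (U *m 1%:M) [Y, X]
    + - nab Y (U *m - adm c X) + - (U *m (adm c Y *m adm c X)))); last first.
  move=> U; have UX : [U, X] = U *m - adm c X by rewrite lbrC /lbr mulmxN.
  have UYX : [[U, Y], X] = U *m (adm c Y *m adm c X).
    by rewrite (lbrC [U, Y]) (lbrC U) lbrNr opprK /lbr mulmxA.
  by rewrite /curv !(nabla_r_a _ Xa) mulmx1 UX UYX.
have adm1 : 1%:M *m G = G *m 1%:M^T by rewrite mul1mx trmx1 mulmx1.
rewrite !mxtrace_lin1D !mxtrace_lin1N lin1_mx_mulmx.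
rewrite (mxtrace_nabla_selfadj_l sG uG lbrC adm1) mul1mx mxtrace_ad_g ?lbr_sub_g //.
by rewrite (mxtrace_nabla_selfadj_r sG uG lbrC (ad_a_mxN Xa)) !oppr0 !add0r.
Qed.

Lemma mulmx_projg_idem : projg *m projg = projg.
Proof. by have := projg_id (projg_sub 1%:M); rewrite mul1mx. Qed.
Lemma mulmx_proja_idem : proja *m proja = proja.
Proof. by have := proja_id (proja_sub 1%:M); rewrite mul1mx. Qed.

Lemma addmx_projga : projg + proja = 1%:M.
Proof. by rewrite [RHS](ga_decomp 1%:M) !mul1mx. Qed.

Lemma mxtrace_split M : \tr M = \tr (M *m projg) + \tr (M *m proja).
Proof. by rewrite -mxtraceD -mulmxDr addmx_projga mulmx1. Qed.

Lemma lbr_projg_a U X : (X <= a)%MS -> [U *m projg, X] = - (U *m adm c X).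
Proof.
move=> Xa; have XUa : U *m proja *m adm c X = 0 := lbr_a Xa (proja_sub U).
by rewrite lbrC /lbr [in RHS](ga_decomp U) mulmxDl XUa addr0.
Qed.

Definition curv_g V W U :=
  nab U (nab V W *m projg) - nab V (nab U W *m projg) - nab [U, V] W.

Lemma curv_g_linear V W : linear (curv_g V W).
Proof.
move=> x U U'; rewrite /curv_g !(nablaDl, nablaZl, lbrDl, lbrZl).
rewrite (mulmxDl (x *: nab U W)) -(scalemxAl x (nab U W)) nablaDr nablaZr.
by rewrite !scalerBr [LHS]opprDDD.
Qed.

Lemma curv_split V W U : curv c G U V W =
  curv_g V W U + [U, nab V W *m proja] - [V, nab U W *m proja].
Proof.
have nabE P Q : nab P Q = nab P (Q *m projg) + [P, Q *m proja].
  by rewrite {1}(ga_decomp Q) nablaDr (nabla_r_a _ (proja_sub Q)).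
rewrite /curv /curv_g (nabE U (nab V W)) (nabE V (nab U W)) opprD !addrA.
set A := nab U _; set C := nab V (_ *m projg); set b := [U, _].
by rewrite (addrAC A) (addrAC (A - C + b)) (addrAC (A - C)).
Qed.

Variable H : 'rV[R]_n.
Hypothesis H_trace : forall v, << H, v >> = \tr (adm c v).

Lemma H_sub_a : (H <= a)%MS.
Proof.
suff Hg0 : H *m projg = 0 by rewrite (ga_decomp H) Hg0 add0r proja_sub.
apply: orthg_eq0 (projg_sub H) _ => v vg.
have := H_trace v; rewrite mxtrace_ad_g // {1}(ga_decomp H) ipDl.
by rewrite (orth_ag (proja_sub H) vg) addr0.
Qed.

Lemma ip_nabla_H V W : (V <= g)%MS -> (W <= g)%MS -> << nab V W, H >> = << [H, V], W >>.
Proof.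
move=> Vg Wg; rewrite (ip_nabla c uG) /koszul (orth_ga (lbr_sub_g V W) H_sub_a).
by rewrite (lbrC W H) ipNl (ad_a_selfadj W V H_sub_a) (ipC W) ?sG //; field.
Qed.

Lemma mxtrace_ad_nabla_a V W : (V <= g)%MS -> (W <= g)%MS ->
  \tr (adm c (nab V W *m proja)) = << [H, V], W >>.
Proof.
move=> Vg Wg; rewrite -H_trace ipC ?sG // -(ip_nabla_H Vg Wg).
by rewrite [in RHS](ga_decomp (nab V W)) ipDl (orth_ga (projg_sub _) H_sub_a) add0r.
Qed.

Lemma ric_gauss V W : (V <= g)%MS -> (W <= g)%MS ->
  ric c G V W = \tr (lin1_mx (curv_g V W) *m projg) - << [H, V], W >>.
Proof.
move=> Vg Wg; pose f U := nab (U *m projg) W *m proja.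
pose h Y := [V, Y *m proja].
have lin_f : linear f.
  by move=> x U U'; rewrite /f mulmxDl -scalemxAl nablaDl nablaZl mulmxDl -scalemxAl.
have lin_h : linear h by move=> x U U'; rewrite /h mulmxDl -scalemxAl lbrDr lbrZr.
have g_part U : curv c G (U *m projg) V W *m projg
    = curv_g V W (U *m projg) *m projg + - (U *m adm c (nab V W *m proja)) + - h (f U).
  rewrite curv_split [in LHS]mulmxBl [in LHS]mulmxDl (projg_id (lbr_sub_g (U *m projg) _)).
  rewrite (projg_id (lbr_sub_g V _)) /h /f (proja_id (proja_sub _)).
  by rewrite lbr_projg_a ?proja_sub.
have a_part U : curv c G (U *m proja) V W *m proja = f (h U).
  rewrite /curv /f /h (nabla_a _ (proja_sub U)) (nabla_a W (proja_sub U)) nabla0r.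
  rewrite (projg_id (lbr_sub_g V _)) (lbrC (U *m proja)).
  by rewrite nablaNl subrr sub0r opprK.
have tr_g : \tr (lin1_mx (fun U => curv c G U V W) *m projg)
    = \tr (lin1_mx (curv_g V W) *m projg) - \tr (adm c (nab V W *m proja))
      - \tr (lin1_mx (fun U => h (f U))).
  rewrite -(mxtrace_lin1_conj (curv_linear c G V W) mulmx_projg_idem).
  rewrite -(mxtrace_lin1_conj (curv_g_linear V W) mulmx_projg_idem).
  rewrite -(lin1_mx_mulmx (adm c (nab V W *m proja))) -!mxtrace_lin1N -!mxtrace_lin1D.
  by congr (\tr _); apply: eq_lin1_mx => U; rewrite g_part.
have tr_a : \tr (lin1_mx (fun U => curv c G U V W) *m proja)
    = \tr (lin1_mx (fun U => f (h U))).
  rewrite -(mxtrace_lin1_conj (curv_linear c G V W) mulmx_proja_idem).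
  by congr (\tr _); apply: eq_lin1_mx.
(* The cross term of the g-block and the whole a-block are h \o f and f \o h. *)
rewrite ric_mxtrace mxtrace_split tr_g tr_a mxtrace_ad_nabla_a //.
by rewrite (mxtrace_lin1_comp lin_h lin_f) subrK.
Qed.

Local Notation B := (row_base g).
Local Notation cg := (restr_sc c B).
Local Notation Gg := (restr_metric G B).
Implicit Types (y z t : 'rV[R]_(\rank g)).

Definition coordg := projg *m pinvmx B.

Lemma mulmx_base_sub m (y : 'M[R]_(m, \rank g)) : (y *m B <= g)%MS.
Proof. by rewrite -(eq_row_base g) submxMl. Qed.

Lemma mulmx_pinv_baseK m (u : 'M[R]_(m, n)) : (u <= g)%MS -> u *m pinvmx B *m B = u.
Proof. by move=> ug; rewrite mulmxKpV // eq_row_base. Qed.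

Lemma coordgK m (u : 'M[R]_(m, n)) : u *m coordg *m B = u *m projg.
Proof. by rewrite /coordg (mulmxA u) mulmx_pinv_baseK ?projg_sub. Qed.

Lemma ip_restr y z : ip Gg y z = << y *m B, z *m B >>.
Proof.
by rewrite /ip /restr_metric (trmx_mul z B) (mulmxA y (B *m G)) (mulmxA y B G)
  (mulmxA (y *m B *m G)).
Qed.

Lemma lbr_restr y z : lbr cg y z *m B = [y *m B, z *m B].
Proof.
have -> : lbr cg y z = \sum_j z 0 j *: \sum_i y 0 i *: cg i j.
  by rewrite /lbr mulmx_sum_row; apply: eq_bigr => j _; rewrite row_adm.
rewrite [y *m B]mulmx_sum_row [z *m B]mulmx_sum_row lbr_suml mulmx_suml.
under [RHS]eq_bigr => i _ do rewrite lbrZl lbr_sumr scaler_sumr.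
rewrite [RHS]exchange_big /=; apply: eq_bigr => j _.
rewrite -scalemxAl mulmx_suml scaler_sumr; apply: eq_bigr => i _.
rewrite -scalemxAl /restr_sc mulmx_pinv_baseK ?lbr_sub_g //.
by rewrite lbrZr !scalerA mulrC.
Qed.

Lemma restr_metric_unit : Gg \in unitmx.
Proof.
rewrite -row_free_unit -kermx_eq0; apply/rowV0P => v; rewrite sub_kermx => /eqP vGg.
have vB0 : v *m B = 0.
  apply: orthg_eq0 (mulmx_base_sub v) _ => w wg.
  by rewrite -(mulmx_pinv_baseK wg) -ip_restr /ip vGg mul0mx mxE.
by apply: (row_free_inj (row_base_free g)); rewrite vB0 mul0mx.
Qed.

Lemma nabla_restr y z : nabla cg Gg y z = nab (y *m B) (z *m B) *m coordg.
Proof.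
apply: (nabla_ipP restr_metric_unit) => t.
have -> : koszul cg Gg y z t = koszul c G (y *m B) (z *m B) (t *m B).
  by rewrite /koszul !ip_restr !lbr_restr.
rewrite ip_restr coordgK -(ip_nabla c uG).
by rewrite [in RHS](ga_decomp (nab _ _)) ipDl (orth_ag (proja_sub _) (mulmx_base_sub t)) addr0.
Qed.

Lemma curv_restr t y z :
  curv cg Gg t y z = curv_g (y *m B) (z *m B) (t *m B) *m coordg.
Proof. by rewrite /curv !nabla_restr !coordgK lbr_restr /curv_g !mulmxBl. Qed.

Lemma ric_restr y z : ric cg Gg y z = \tr (lin1_mx (curv_g (y *m B) (z *m B)) *m projg).
Proof.
rewrite -coordgK mxtrace_mulC mulmxA /ric /mxtrace; apply: eq_bigr => i _.
rewrite curv_restr -rowE -(mul_rV_lin1_linear _ (curv_g_linear _ _)) -!row_mul.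
by rewrite mxE.
Qed.

Definition restr_adH := restr_op (adm c H) B.

Lemma restr_adH_base y : y *m restr_adH *m B = [H, y *m B].
Proof.
rewrite /restr_adH /restr_op (mulmxA y (B *m adm c H)) (mulmxA y B).
exact/mulmx_pinv_baseK/lbr_sub_g.
Qed.

Lemma Ricop_restrP l y :
  Ricop cg Gg y = l *: y + y *m restr_adH <->
  (forall z, ric c G (y *m B) (z *m B) = l * << y *m B, z *m B >>).
Proof.
have ric_yz z : ric cg Gg y z = ric c G (y *m B) (z *m B) + << [H, y *m B], z *m B >>.
  by rewrite ric_restr ric_gauss ?mulmx_base_sub // subrK.
rewrite (RicopP cg restr_metric_unit); split=> E z; have := E z;
  rewrite ric_yz ipDl ipZl !ip_restr restr_adH_base; first exact: addIr.
by move=> ->.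
Qed.

Lemma einstein_restr l : (forall Y, Ricop c G Y = l *: Y) ->
  forall y, Ricop cg Gg y = l *: y + y *m restr_adH.
Proof. by move=> /(Ricop_scalarP c uG) E y; apply/Ricop_restrP => z; apply: E. Qed.

Lemma einstein_killing_a l : (forall Y, Ricop c G Y = l *: Y) ->
  forall X Y, (X <= a)%MS -> \tr (adm c Y *m adm c X) = - l * << X, Y >>.
Proof.
move=> /(Ricop_scalarP c uG) E X Y Xa.
by rewrite mxtrace_mulC mulNr -E ric_a_l // opprK.
Qed.

Lemma einstein_of_restr l :
  (forall y, Ricop cg Gg y = l *: y + y *m restr_adH) ->
  (forall X Y, (X <= a)%MS -> (Y <= a)%MS -> \tr (adm c Y *m adm c X) = - l * << X, Y >>) ->
  forall Y, Ricop c G Y = l *: Y.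
Proof.
move=> restrE killE; apply/(Ricop_scalarP c uG) => Y Z.
have gg : ric c G (Y *m projg) (Z *m projg) = l * << Y *m projg, Z *m projg >>.
  have /Ricop_restrP E := restrE (Y *m projg *m pinvmx B).
  by have := E (Z *m projg *m pinvmx B); rewrite !mulmx_pinv_baseK ?projg_sub.
have ga : ric c G (Y *m projg) (Z *m proja) = 0.
  by rewrite ric_a_r ?proja_sub // mxtrace_ad_g_ad ?projg_sub // oppr0.
have ag : ric c G (Y *m proja) (Z *m projg) = 0.
  by rewrite ric_a_l ?proja_sub // mxtrace_mulC mxtrace_ad_g_ad ?projg_sub // oppr0.
have aa : ric c G (Y *m proja) (Z *m proja) = l * << Y *m proja, Z *m proja >>.
  by rewrite ric_a_l ?proja_sub // mxtrace_mulC killE ?proja_sub // mulNr opprK.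
rewrite (ga_decomp Y) (ga_decomp Z) !(ricDl, ricDr) !(ipDl, ipDr) gg ga ag aa.
rewrite (orth_ga (projg_sub Y) (proja_sub Z)) (orth_ag (proja_sub Y) (projg_sub Z)).
by rewrite !(addr0, add0r) mulrDr.
Qed.

Lemma einstein_mxtrace_restr_adH l : (forall Y, Ricop c G Y = l *: Y) ->
  \tr (restr_adH *m restr_adH) = - l * \tr restr_adH.
Proof.
move=> /(Ricop_scalarP c uG) E; set A := adm c H.
have adHK : A *m pinvmx B *m B = A.
  by apply/mulmx_pinv_baseK/row_subP => i; rewrite rowE lbr_sub_g.
rewrite mxtrace_restr_op_sqr // mxtrace_restr_op //.
by rewrite -H_trace mulNr -E ric_a_l ?H_sub_a // opprK.
Qed.

End PseudoIwasawa.

Theorem theorem3p9 (R : realType) (n : nat)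
  (c : 'I_n -> 'I_n -> 'rV[R]_n) (G : 'M[R]_n) (g a : 'M[R]_n)
  (H : 'rV[R]_n) (lambda : R) :
  is_lie_algebra c -> is_solvable c -> is_metric G ->
  pseudo_iwasawa c G g a ->
  (forall v, ip G H v = \tr (adm c v)) ->
  let B := row_base g in
  let D := restr_op (adm c H) B in
  ((forall Y, Ricop c G Y = lambda *: Y) <->
   ((forall y, Ricop (restr_sc c B) (restr_metric G B) y = lambda *: y + y *m D)
    /\ (forall X Y, (X <= a)%MS -> (Y <= a)%MS ->
          \tr (adm c Y *m adm c X) = - lambda * ip G X Y)))
  /\ ((forall Y, Ricop c G Y = lambda *: Y) ->
      \tr (D *m D) = - lambda * \tr D).
Proof.
move=> lie _ met pI H_trace B D; split; first split.
- move=> E; split; first exact (einstein_restr lie met pI H_trace E).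
  by move=> X Y Xa _; exact (einstein_killing_a lie met pI E Y Xa).
- by case=> restrE killE; exact (einstein_of_restr lie met pI H_trace restrE killE).
- by move=> E; exact (einstein_mxtrace_restr_adH lie met pI H_trace E).
Qed.
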